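(* Let $\psi(x)=(x(1-x))^{0.697}\bigl(5-\sqrt{x(1-x)}\bigr)$ for $x\in[0,1]$. For every balanced tetrahedral erasure channel $W$ with $0<H(W)<1$ and $Q(W)\ge 9/7$, $$\frac{\psi(H(W^{s}))+\psi(H(W^{p}))}{2\,\psi(H(W))}<0.818.$$
   Context: $\mathrm{TEC}(p,q,r,s,t)$ denotes a tetrahedral erasure channel with parameters $p,q,r,s,t\ge0$ summing to $1$. Its entropy is $H=\frac{q+r+s}{2}+t$, its edge mass is $E=q+r+s$, and its Quetelet index is $Q=E/(H(1-H))$. It is balanced if $q=r=s$. For $W=\mathrm{TEC}(p,q,r,s,t)$, the serial child is $W^{s}=\mathrm{TEC}(p^2,\ ps+sq+qp,\ pq+qr+rp,\ pr+rs+sp,\ 1-\text{(sum of the other four)})$ and the parallel child is $W^{p}=\mathrm{TEC}(1-\text{(sum of the other four)},\ ts+sq+qt,\ tq+qr+rt,\ tr+rs+st,\ t^2)$. *)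

From Stdlib Require Import Reals Lra.
Open Scope R_scope.

Record TEC := mkTEC { tp : R; tq : R; tr : R; ts : R; tt : R }.

Definition valid (W : TEC) : Prop :=
  0 <= tp W /\ 0 <= tq W /\ 0 <= tr W /\ 0 <= ts W /\ 0 <= tt W /\
  tp W + tq W + tr W + ts W + tt W = 1.

Definition entropy (W : TEC) : R := (tq W + tr W + ts W) / 2 + tt W.
Definition edge_mass (W : TEC) : R := tq W + tr W + ts W.
Definition quetelet (W : TEC) : R :=
  edge_mass W / (entropy W * (1 - entropy W)).
Definition balanced (W : TEC) : Prop := tq W = tr W /\ tr W = ts W.

Definition serial_child (W : TEC) : TEC :=
  let p := tp W in let q := tq W in let r := tr W in let s := ts W in
  let a := p ^ 2 in
  let b := p * s + s * q + q * p in
  let c := p * q + q * r + r * p in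
  let d := p * r + r * s + s * p in
  mkTEC a b c d (1 - (a + b + c + d)).

Definition parallel_child (W : TEC) : TEC :=
  let t := tt W in let q := tq W in let r := tr W in let s := ts W in
  let b := t * s + s * q + q * t in
  let c := t * q + q * r + r * t in
  let d := t * r + r * s + s * t in
  let e := t ^ 2 in
  mkTEC (1 - (b + c + d + e)) b c d e.

(* real power y^a for y >= 0, with the convention 0^a = 0 (a > 0) *)
Definition rpow (y a : R) : R := if Rle_dec y 0 then 0 else Rpower y a.

Definition psi (x : R) : R :=
  rpow (x * (1 - x)) (697 / 1000) * (5 - sqrt (x * (1 - x))).

(* Write [h = H(W)] and [E = E(W)]. For a balanced channel the children have entropies
   [2h - h^2 + E^2/12] and [h^2 - E^2/12], and [psi x = phi (x (1 - x))] where
   [phi y = y^alpha (5 - sqrt y)] is increasing and concave on [(0, 1/4]]. As [psi] is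
   symmetric about [1/2] we may take [h <= 1/2]. Raising [E] pushes the two children's
   entropies apart by the same amount, so by concavity the sum of their [psi] values is
   largest at the smallest admissible [E = 9/7 h (1 - h)]. There the factor
   [(h (1 - h))^alpha] cancels and an inequality in [h] alone remains; it is checked on a
   partition of [(0, 1/2]] by fixed-point interval arithmetic, bounding [x^alpha] above by
   tangent lines [c^alpha (1 - alpha + alpha x / c)] at points [c] for which [c^alpha] is
   known exactly, as [(r^1000)^alpha = r^697]. *)

From Stdlib Require Import Reals ZArith Lra Lia List.
Import ListNotations.
Open Scope R_scope.

Section IncreasingConcave.

Variables (f f' : R -> R) (b : R).
Hypothesis f_derivative : forall y, 0 < y <= b -> derivable_pt_lim f y (f' y).
Hypothesis f'_ge0 : forall y, 0 < y <= b -> 0 <= f' y.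
Hypothesis f'_antitone : forall x y, 0 < x -> x <= y -> y <= b -> f' y <= f' x.

Lemma increasing_on x y : 0 < x -> x <= y -> y <= b -> f x <= f y.
Proof.
  intros Hx Hxy Hyb.
  destruct (Req_dec x y) as [<-|Hne]; [lra|].
  destruct (MVT_cor2 f f' x y) as [c [Hfc Hc]]; [lra| |].
  - intros c Hc; apply f_derivative; lra.
  - assert (0 <= f' c) by (apply f'_ge0; lra). nra.
Qed.

Lemma increment_antitone x1 x2 d :
  0 < x1 -> x1 <= x2 -> 0 <= d -> x2 + d <= b ->
  f (x2 + d) - f x2 <= f (x1 + d) - f x1.
Proof.
  intros Hx1 Hx12 Hd Hb.
  destruct (Req_dec x1 x2) as [<-|Hne]; [lra|].
  destruct (MVT_cor2 (fun z => f (z + d) - f z) (fun z => f' (z + d) - f' z) x1 x2)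
    as [c [Hfc Hc]]; [lra| |].
  - intros c Hc.
    apply (derivable_pt_lim_minus (fun z => f (z + d)) f); [|apply f_derivative; lra].
    rewrite <- (Rmult_1_r (f' (c + d))).
    apply (derivable_pt_lim_comp (fun z => z + d) f); [|apply f_derivative; lra].
    rewrite <- (Rplus_0_r 1).
    apply derivable_pt_lim_plus; [apply derivable_pt_lim_id|apply derivable_pt_lim_const].
  - assert (f' (c + d) <= f' c) by (apply f'_antitone; lra). nra.
Qed.

Lemma concave_increasing_exchange ys yp ys' yp' :
  0 < yp' -> yp' <= yp -> yp <= ys -> ys <= b -> 0 < ys' -> ys' <= b ->
  ys' - ys <= yp - yp' -> f ys' + f yp' <= f ys + f yp.
Proof.
  intros Hyp' Hp Hps Hs Hys' Hs' Hshift.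
  destruct (Rle_lt_dec ys' ys) as [Hle|Hlt].
  - assert (f ys' <= f ys) by (apply increasing_on; lra).
    assert (f yp' <= f yp) by (apply increasing_on; lra).
    lra.
  - pose proof (increment_antitone yp' ys (ys' - ys)) as Hinc.
    replace (ys + (ys' - ys)) with ys' in Hinc by ring.
    assert (f (yp' + (ys' - ys)) <= f yp) by (apply increasing_on; lra).
    specialize (Hinc Hyp' ltac:(lra) ltac:(lra) ltac:(lra)).
    lra.
Qed.

End IncreasingConcave.

Definition alpha : R := 697 / 1000.

Definition phi (y : R) : R := 5 * Rpower y alpha - Rpower y (alpha + / 2).

Definition phi' (y : R) : R :=
  5 * (alpha * Rpower y (alpha - 1)) - (alpha + / 2) * Rpower y (alpha + / 2 - 1).

Lemma Rpower_pos x e : 0 < Rpower x e.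
Proof. apply exp_pos. Qed.

Lemma sqrt_le_half y : y <= / 4 -> sqrt y <= / 2.
Proof.
  intros Hy. rewrite <- (sqrt_square (/ 2)) by lra.
  apply sqrt_le_1_alt. lra.
Qed.

Lemma var_le_quarter x : x * (1 - x) <= / 4.
Proof. pose proof (Rle_0_sqr (x - / 2)). unfold Rsqr in *. lra. Qed.

Lemma phi_derivative y : 0 < y -> derivable_pt_lim phi y (phi' y).
Proof.
  intros Hy.
  apply (derivable_pt_lim_minus (fun z => 5 * Rpower z alpha)).
  - apply (derivable_pt_lim_scal (fun z => Rpower z alpha)).
    now apply derivable_pt_lim_power.
  - now apply derivable_pt_lim_power.
Qed.

Lemma phi'_antitone x y : 0 < x -> x <= y -> phi' y <= phi' x.
Proof.
  intros Hx Hxy. unfold phi'.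
  assert (Rpower y (alpha - 1) <= Rpower x (alpha - 1)).
  { replace (alpha - 1) with (- (1 - alpha)) by ring.
    rewrite !Rpower_Ropp.
    apply Rinv_le_contravar; [apply Rpower_pos|].
    apply Rle_Rpower_l; unfold alpha; lra. }
  assert (Rpower x (alpha + / 2 - 1) <= Rpower y (alpha + / 2 - 1)).
  { apply Rle_Rpower_l; unfold alpha; lra. }
  unfold alpha in *. nra.
Qed.

Lemma phi'_ge0 y : 0 < y <= / 4 -> 0 <= phi' y.
Proof.
  intros Hy. unfold phi'.
  replace (alpha + / 2 - 1) with ((alpha - 1) + / 2) by ring.
  rewrite Rpower_plus, Rpower_sqrt by lra.
  assert (sqrt y <= / 2) by (apply sqrt_le_half; lra).
  pose proof (Rpower_pos y (alpha - 1)).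
  pose proof (sqrt_pos y).
  unfold alpha in *. nra.
Qed.

Lemma phi_eq y : 0 < y -> phi y = Rpower y alpha * (5 - sqrt y).
Proof.
  intros Hy. unfold phi. rewrite Rpower_plus, Rpower_sqrt by lra. ring.
Qed.

Lemma phi_pos y : 0 < y <= / 4 -> 0 < phi y.
Proof.
  intros Hy. rewrite phi_eq by lra.
  assert (sqrt y <= / 2) by (apply sqrt_le_half; lra).
  apply Rmult_lt_0_compat; [apply Rpower_pos|lra].
Qed.

Lemma psi_phi x : 0 < x < 1 -> psi x = phi (x * (1 - x)).
Proof.
  intros Hx. assert (Hy : 0 < x * (1 - x)) by nra.
  unfold psi, rpow. destruct (Rle_dec (x * (1 - x)) 0); [lra|].
  now rewrite phi_eq.
Qed.

Lemma psi_reflect x : psi (1 - x) = psi x.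
Proof. unfold psi. now replace ((1 - x) * (1 - (1 - x))) with (x * (1 - x)) by ring. Qed.

Lemma psi_pos x : 0 < x < 1 -> 0 < psi x.
Proof.
  intros Hx. rewrite psi_phi by lra.
  apply phi_pos. split; [nra|apply var_le_quarter].
Qed.

Definition serial_entropy (h E : R) : R := 2 * h - h ^ 2 + E ^ 2 / 12.
Definition parallel_entropy (h E : R) : R := h ^ 2 - E ^ 2 / 12.

Lemma entropy_serial_child W :
  valid W -> balanced W ->
  entropy (serial_child W) = serial_entropy (entropy W) (edge_mass W).
Proof.
  destruct W as [p q r s t].
  unfold valid, balanced, serial_child, serial_entropy, entropy, edge_mass; cbn.
  intros (_ & _ & _ & _ & _ & Hsum) [<- <-].
  replace p with (1 - q - q - q - t) by lra. field.
Qed.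

Lemma entropy_parallel_child W :
  balanced W -> entropy (parallel_child W) = parallel_entropy (entropy W) (edge_mass W).
Proof.
  destruct W as [p q r s t].
  unfold balanced, parallel_child, parallel_entropy, entropy, edge_mass; cbn.
  intros [<- <-]. field.
Qed.

Lemma serial_entropy_reflect h E : serial_entropy (1 - h) E = 1 - parallel_entropy h E.
Proof. unfold serial_entropy, parallel_entropy. ring. Qed.

Lemma parallel_entropy_reflect h E : parallel_entropy (1 - h) E = 1 - serial_entropy h E.
Proof. unfold serial_entropy, parallel_entropy. ring. Qed.

Lemma edge_mass_le_entropy W :
  valid W -> edge_mass W <= 2 * entropy W /\ edge_mass W <= 2 * (1 - entropy W).
Proof.
  destruct W as [p q r s t]. unfold valid, edge_mass, entropy; cbn. lra.
Qed.

Lemma edge_mass_ge_of_quetelet W :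
  0 < entropy W < 1 -> quetelet W >= 9 / 7 ->
  9 / 7 * (entropy W * (1 - entropy W)) <= edge_mass W.
Proof.
  unfold quetelet. intros Hh HQ.
  set (y := entropy W * (1 - entropy W)) in *.
  assert (Hy : 0 < y) by (unfold y; nra).
  replace (edge_mass W) with (edge_mass W / y * y) by (field; lra).
  apply Rmult_le_compat_r; lra.
Qed.

(* Raising [E] adds to the serial entropy exactly what it takes from the parallel one. *)
Lemma psi_children_antitone h E1 E2 :
  0 < h <= 1 / 2 -> 0 <= E1 <= E2 -> 0 < parallel_entropy h E2 ->
  psi (serial_entropy h E2) + psi (parallel_entropy h E2)
  <= psi (serial_entropy h E1) + psi (parallel_entropy h E1).
Proof.
  intros Hh HE Hp2.
  set (Hs := serial_entropy h E1). set (Hp := parallel_entropy h E1).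
  set (d := (E2 ^ 2 - E1 ^ 2) / 12).
  assert (Hd : 0 <= d) by (unfold d; nra).
  assert (Es : serial_entropy h E2 = Hs + d) by (unfold Hs, d, serial_entropy; field).
  assert (Ep : parallel_entropy h E2 = Hp - d) by (unfold Hp, d, parallel_entropy; field).
  rewrite Es, Ep in *.
  assert (Hsum : Hs + Hp = 2 * h) by (unfold Hs, Hp, serial_entropy, parallel_entropy; ring).
  assert (Hp_le : Hp <= h * h) by (unfold Hp, parallel_entropy; nra).
  assert (Hp_le_Hs : Hp <= Hs) by nra.
  rewrite !psi_phi by nra.
  apply (concave_increasing_exchange phi phi' (/ 4)).
  - intros y Hy; apply phi_derivative; lra.
  - exact phi'_ge0.
  - intros x y Hx Hxy _; now apply phi'_antitone.
  - nra.
  - assert (0 <= d * (1 - 2 * Hp + d)) by (apply Rmult_le_pos; nra). nra.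
  - assert (0 <= (Hs - Hp) * (1 - Hs - Hp)) by (apply Rmult_le_pos; lra). nra.
  - apply var_le_quarter.
  - nra.
  - apply var_le_quarter.
  - assert (0 <= d * (Hs - Hp + d)) by (apply Rmult_le_pos; lra). nra.
Qed.

Definition c_thr : R := 81 / 588.

Definition u_ratio (h : R) : R :=
  (2 - h + c_thr * h * (1 - h) ^ 2) * (1 - h) * (1 - c_thr * h ^ 2).

Definition f_ratio (h : R) : R := 1 - c_thr * (1 - h) ^ 2.

Definition v_ratio (h : R) : R := h * f_ratio h * (1 - h ^ 2 * f_ratio h) / (1 - h).

Lemma u_ratio_pos h : 0 < h <= 1 / 2 -> 0 < u_ratio h.
Proof.
  intros Hh. unfold u_ratio, c_thr.
  assert (0 < 2 - h + 81 / 588 * h * (1 - h) ^ 2) by nra.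
  assert (0 < 1 - 81 / 588 * h ^ 2) by nra.
  apply Rmult_lt_0_compat; [apply Rmult_lt_0_compat|]; lra.
Qed.

Lemma v_ratio_pos h : 0 < h <= 1 / 2 -> 0 < v_ratio h.
Proof.
  intros Hh. unfold v_ratio, f_ratio, c_thr.
  assert (0 < 1 - 81 / 588 * (1 - h) ^ 2) by nra.
  assert (0 < 1 - h ^ 2 * (1 - 81 / 588 * (1 - h) ^ 2)) by nra.
  apply Rdiv_lt_0_compat; [|lra].
  apply Rmult_lt_0_compat; [apply Rmult_lt_0_compat|]; lra.
Qed.

(* At the threshold [E = 9/7 h (1 - h)], [c_thr = (9/7)^2 / 12] and both children have
   [x (1 - x)] divisible by [h (1 - h)]. *)
Lemma serial_threshold_var h :
  let x := serial_entropy h (9 / 7 * (h * (1 - h))) in x * (1 - x) = u_ratio h * (h * (1 - h)).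
Proof. unfold serial_entropy, u_ratio, c_thr. field. Qed.

Lemma parallel_threshold_var h : h < 1 ->
  let x := parallel_entropy h (9 / 7 * (h * (1 - h))) in x * (1 - x) = v_ratio h * (h * (1 - h)).
Proof. intros Hh. unfold parallel_entropy, v_ratio, f_ratio, c_thr. field. lra. Qed.

(* [K = 2 * 0.818] *)
Definition K : R := 1636 / 1000.

Definition reduced_ineq (h : R) : Prop :=
  let y := h * (1 - h) in
  Rpower (u_ratio h) alpha * (5 - sqrt (u_ratio h * y))
  + Rpower (v_ratio h) alpha * (5 - sqrt (v_ratio h * y)) < K * (5 - sqrt y).

Local Open Scope Z_scope.

Definition ONE : Z := Eval compute in 2 ^ 40.

Definition mul_dn (a b : Z) : Z := Z.shiftr (a * b) 40.
Definition mul_up (a b : Z) : Z := - Z.shiftr (- (a * b)) 40.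
Definition inv_dn (a : Z) : Z := (ONE * ONE) / a.
Definition inv_up (a : Z) : Z := - ((- (ONE * ONE)) / a).
Definition sqrt_dn (a : Z) : Z := Z.sqrt (a * ONE).
Definition sqrt_up (a : Z) : Z := Z.sqrt (a * ONE) + 1.

Local Open Scope R_scope.

Definition fx (n : Z) : R := IZR n / IZR ONE.

Lemma ONE_pos : 0 < IZR ONE.
Proof. now apply IZR_lt. Qed.

Lemma shiftr_ONE n : Z.shiftr n 40 = (n / ONE)%Z.
Proof. now rewrite Z.shiftr_div_pow2. Qed.

Lemma fx_add a b : fx (a + b) = fx a + fx b.
Proof. unfold fx. rewrite plus_IZR. field. apply Rgt_not_eq, ONE_pos. Qed.

Lemma fx_sub a b : fx (a - b) = fx a - fx b.
Proof. unfold fx. rewrite minus_IZR. field. apply Rgt_not_eq, ONE_pos. Qed.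

Lemma fx_scale c : fx (c * ONE) = IZR c.
Proof. unfold fx. rewrite mult_IZR. field. apply Rgt_not_eq, ONE_pos. Qed.

Lemma fx_mulZ c a : fx (c * a) = IZR c * fx a.
Proof. unfold fx. rewrite mult_IZR. field. apply Rgt_not_eq, ONE_pos. Qed.

Lemma fx_le a b : (a <= b)%Z -> fx a <= fx b.
Proof.
  intros Hab. apply Rmult_le_compat_r; [left; apply Rinv_0_lt_compat, ONE_pos|].
  now apply IZR_le.
Qed.

Lemma fx_lt a b : (a < b)%Z -> fx a < fx b.
Proof.
  intros Hab. apply Rmult_lt_compat_r; [apply Rinv_0_lt_compat, ONE_pos|].
  now apply IZR_lt.
Qed.

Lemma fx_ONE : fx ONE = 1.
Proof. unfold fx. field. apply Rgt_not_eq, ONE_pos. Qed.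

Lemma fx0 : fx 0 = 0.
Proof. unfold fx. simpl. unfold Rdiv. ring. Qed.

Lemma fx_nonneg a : (0 <= a)%Z -> 0 <= fx a.
Proof. intros Ha. rewrite <- fx0. now apply fx_le. Qed.

Lemma IZR_div_le n d : (0 < d)%Z -> IZR (n / d) <= IZR n / IZR d.
Proof.
  intros Hd.
  assert (Hdiv : (d * (n / d) <= n)%Z) by (apply Z.mul_div_le; lia).
  apply IZR_le in Hdiv. rewrite mult_IZR in Hdiv. apply IZR_lt in Hd.
  apply (Rmult_le_reg_l (IZR d)); [exact Hd|].
  replace (IZR d * (IZR n / IZR d)) with (IZR n) by (field; lra).
  exact Hdiv.
Qed.

Lemma IZR_div_ceil_ge n d : (0 < d)%Z -> IZR n / IZR d <= - IZR (- n / d).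
Proof.
  intros Hd. pose proof (IZR_div_le (- n) d Hd) as Hdiv.
  rewrite opp_IZR in Hdiv. unfold Rdiv in *. lra.
Qed.

Lemma fx_mul_dn a b : fx (mul_dn a b) <= fx a * fx b.
Proof.
  unfold mul_dn, fx. rewrite shiftr_ONE.
  replace (IZR a / IZR ONE * (IZR b / IZR ONE)) with (IZR (a * b) / IZR ONE / IZR ONE)
    by (rewrite mult_IZR; field; apply Rgt_not_eq, ONE_pos).
  apply Rmult_le_compat_r; [left; apply Rinv_0_lt_compat, ONE_pos|].
  now apply IZR_div_le.
Qed.

Lemma fx_mul_up a b : fx a * fx b <= fx (mul_up a b).
Proof.
  unfold mul_up, fx. rewrite shiftr_ONE, opp_IZR.
  replace (IZR a / IZR ONE * (IZR b / IZR ONE)) with (IZR (a * b) / IZR ONE / IZR ONE)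
    by (rewrite mult_IZR; field; apply Rgt_not_eq, ONE_pos).
  apply Rmult_le_compat_r; [left; apply Rinv_0_lt_compat, ONE_pos|].
  now apply IZR_div_ceil_ge.
Qed.

Lemma fx_inv_dn a : (0 < a)%Z -> fx (inv_dn a) <= / fx a.
Proof.
  intros Ha. unfold inv_dn.
  pose proof (IZR_lt _ _ Ha). pose proof ONE_pos.
  replace (/ fx a) with (IZR (ONE * ONE) / IZR a / IZR ONE)
    by (unfold fx; rewrite mult_IZR; field; lra).
  apply Rmult_le_compat_r; [left; now apply Rinv_0_lt_compat|].
  now apply IZR_div_le.
Qed.

Lemma fx_inv_up a : (0 < a)%Z -> / fx a <= fx (inv_up a).
Proof.
  intros Ha. unfold inv_up, fx. rewrite opp_IZR.
  pose proof (IZR_lt _ _ Ha). pose proof ONE_pos.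
  replace (/ (IZR a / IZR ONE)) with (IZR (ONE * ONE) / IZR a / IZR ONE)
    by (rewrite mult_IZR; field; lra).
  apply Rmult_le_compat_r; [left; now apply Rinv_0_lt_compat|].
  now apply IZR_div_ceil_ge.
Qed.

Lemma fx_square_le s a : (s * s <= a * ONE)%Z -> fx s * fx s <= fx a.
Proof.
  intros Hsa. apply IZR_le in Hsa. rewrite !mult_IZR in Hsa. pose proof ONE_pos.
  unfold fx.
  replace (IZR s / IZR ONE * (IZR s / IZR ONE)) with (IZR s * IZR s / (IZR ONE * IZR ONE))
    by (field; lra).
  replace (IZR a / IZR ONE) with (IZR a * IZR ONE / (IZR ONE * IZR ONE)) by (field; lra).
  apply Rmult_le_compat_r; [left; apply Rinv_0_lt_compat; nra|exact Hsa].
Qed.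

Lemma fx_square_ge s a : (a * ONE <= s * s)%Z -> fx a <= fx s * fx s.
Proof.
  intros Hsa. apply IZR_le in Hsa. rewrite !mult_IZR in Hsa. pose proof ONE_pos.
  unfold fx.
  replace (IZR s / IZR ONE * (IZR s / IZR ONE)) with (IZR s * IZR s / (IZR ONE * IZR ONE))
    by (field; lra).
  replace (IZR a / IZR ONE) with (IZR a * IZR ONE / (IZR ONE * IZR ONE)) by (field; lra).
  apply Rmult_le_compat_r; [left; apply Rinv_0_lt_compat; nra|exact Hsa].
Qed.

Lemma fx_sqrt_dn a : fx (sqrt_dn a) <= sqrt (fx a).
Proof.
  unfold sqrt_dn. destruct (Z_lt_le_dec a 0) as [Ha|Ha].
  - rewrite Z.sqrt_neg, fx0 by (unfold ONE; lia). apply sqrt_pos.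
  - destruct (Z.sqrt_spec (a * ONE)) as [Hsq _]; [unfold ONE; lia|].
    rewrite <- (sqrt_square (fx (Z.sqrt (a * ONE)))) by apply fx_nonneg, Z.sqrt_nonneg.
    apply sqrt_le_1_alt, fx_square_le, Hsq.
Qed.

Lemma fx_sqrt_up a : sqrt (fx a) <= fx (sqrt_up a).
Proof.
  unfold sqrt_up. pose proof (Z.sqrt_nonneg (a * ONE)).
  rewrite <- (sqrt_square (fx (Z.sqrt (a * ONE) + 1))) by (apply fx_nonneg; lia).
  apply sqrt_le_1_alt, fx_square_ge.
  destruct (Z_lt_le_dec a 0) as [Ha|Ha]; [unfold ONE in *; nia|].
  destruct (Z.sqrt_spec (a * ONE)) as [_ Hsq]; [unfold ONE; lia|].
  rewrite <- Z.add_1_r in Hsq. lia.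
Qed.

Lemma mul_up_ge x y a b :
  0 <= x -> 0 <= y -> x <= fx a -> y <= fx b -> x * y <= fx (mul_up a b).
Proof.
  intros. apply (Rle_trans _ (fx a * fx b)); [|apply fx_mul_up].
  apply Rmult_le_compat; lra.
Qed.

Lemma mul_dn_le x y a b :
  0 <= fx a -> fx a <= x -> fx b <= y -> 0 <= y -> fx (mul_dn a b) <= x * y.
Proof.
  intros. apply (Rle_trans _ (fx a * fx b)); [apply fx_mul_dn|].
  destruct (Rle_lt_dec 0 (fx b)); [apply Rmult_le_compat; lra|nra].
Qed.

Definition ival : Type := (Z * Z)%type.

Definition encl (I : ival) (x : R) : Prop := fx (fst I) <= x <= fx (snd I).

Definition icst (c : Z) : ival := (c * ONE, c * ONE)%Z.
Definition iadd (I J : ival) : ival := (fst I + fst J, snd I + snd J)%Z.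
Definition isub (I J : ival) : ival := (fst I - snd J, snd I - fst J)%Z.
Definition imul (I J : ival) : ival := (mul_dn (fst I) (fst J), mul_up (snd I) (snd J)).
Definition iinv (I : ival) : ival := (inv_dn (snd I), inv_up (fst I)).

Lemma encl_cst c : encl (icst c) (IZR c).
Proof. unfold encl, icst; cbn [fst snd]. rewrite fx_scale. lra. Qed.

Lemma encl_add I J x y : encl I x -> encl J y -> encl (iadd I J) (x + y).
Proof. unfold encl, iadd; cbn [fst snd]. rewrite !fx_add. lra. Qed.

Lemma encl_sub I J x y : encl I x -> encl J y -> encl (isub I J) (x - y).
Proof. unfold encl, isub; cbn [fst snd]. rewrite !fx_sub. lra. Qed.

Lemma encl_mul I J x y :
  (0 <= fst I)%Z -> (0 <= fst J)%Z -> encl I x -> encl J y -> encl (imul I J) (x * y).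
Proof.
  unfold encl, imul; cbn [fst snd]. intros HI HJ Hx Hy.
  apply fx_nonneg in HI. apply fx_nonneg in HJ.
  split; [apply mul_dn_le|apply mul_up_ge]; lra.
Qed.

Lemma imul_lo_nonneg I J : (0 <= fst I)%Z -> (0 <= fst J)%Z -> (0 <= fst (imul I J))%Z.
Proof. intros. unfold imul, mul_dn; cbn [fst snd]. apply Z.shiftr_nonneg. lia. Qed.

Lemma encl_inv I x : (0 < fst I)%Z -> encl I x -> encl (iinv I) (/ x).
Proof.
  unfold encl, iinv; cbn [fst snd]. intros HI Hx.
  assert (HI' := HI). apply fx_lt in HI'. rewrite fx0 in HI'.
  assert (HJ : (0 < snd I)%Z).
  { apply Z.nle_gt. intros HJ. apply fx_le in HJ. rewrite fx0 in HJ. lra. }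
  pose proof (fx_inv_dn _ HJ). pose proof (fx_inv_up _ HI).
  split.
  - apply (Rle_trans _ (/ fx (snd I))); [lra|]. apply Rinv_le_contravar; lra.
  - apply (Rle_trans _ (/ fx (fst I))); [|lra]. apply Rinv_le_contravar; lra.
Qed.

Lemma iinv_lo_nonneg I : (0 < snd I)%Z -> (0 <= fst (iinv I))%Z.
Proof. intros. unfold iinv, inv_dn; cbn [fst snd]. apply Z.div_pos; [unfold ONE; lia|lia]. Qed.

Definition c_ival : ival := (151463336479, 151463336480)%Z.
Definition om_ival (hI : ival) : ival := isub (icst 1) hI.
Definition A_ival (hI : ival) : ival :=
  iadd (isub (icst 2) hI) (imul (imul c_ival hI) (imul (om_ival hI) (om_ival hI))).
Definition C_ival (hI : ival) : ival := isub (icst 1) (imul c_ival (imul hI hI)).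
Definition F_ival (hI : ival) : ival :=
  isub (icst 1) (imul c_ival (imul (om_ival hI) (om_ival hI))).
Definition G_ival (hI : ival) : ival := isub (icst 1) (imul (imul hI hI) (F_ival hI)).
Definition u_ival (hI : ival) : ival := imul (imul (A_ival hI) (om_ival hI)) (C_ival hI).
Definition v_ival (hI : ival) : ival :=
  imul (imul (imul hI (F_ival hI)) (G_ival hI)) (iinv (om_ival hI)).
(* [h (1 - h)] is increasing on [[0, 1/2]], so no interval product is needed. *)
Definition y_ival (hI : ival) : ival :=
  (mul_dn (fst hI) (ONE - fst hI), mul_up (snd hI) (ONE - snd hI))%Z.

Lemma encl_c_thr : encl c_ival c_thr.
Proof. unfold encl, c_ival, fx, ONE, c_thr; cbn [fst snd]. lra. Qed.

Lemma c_lo_nonneg : (0 <= fst c_ival)%Z.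
Proof. unfold c_ival; cbn [fst]. lia. Qed.

Section CellEnclosures.

Variables (h1 h2 : Z) (h : R).
Hypothesis h1_ge0 : (0 <= h1)%Z.
Hypothesis h2_le_half : (2 * h2 <= ONE)%Z.
Hypothesis h_in : encl (h1, h2) h.

Lemma cell_h_range : 0 <= fx h1 /\ fx h2 <= 1 / 2.
Proof.
  split; [now apply fx_nonneg|].
  pose proof (fx_le _ _ h2_le_half) as Hh2. rewrite fx_ONE, fx_mulZ in Hh2. lra.
Qed.

Lemma h1_le_h2 : (h1 <= h2)%Z.
Proof.
  apply Z.nlt_ge. intros Hlt. apply fx_lt in Hlt.
  destruct h_in; cbn [fst snd] in *. lra.
Qed.

Lemma encl_om : encl (om_ival (h1, h2)) (1 - h).
Proof. apply encl_sub; [apply encl_cst|exact h_in]. Qed.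

Lemma om_lo_pos : (0 < fst (om_ival (h1, h2)))%Z.
Proof. unfold om_ival, isub, icst; cbn [fst snd]. unfold ONE in *. lia. Qed.

Lemma om_hi_pos : (0 < snd (om_ival (h1, h2)))%Z.
Proof.
  pose proof h1_le_h2. pose proof om_lo_pos.
  unfold om_ival, isub, icst in *; cbn [fst snd] in *. lia.
Qed.

Lemma om_lo_nonneg : (0 <= fst (om_ival (h1, h2)))%Z.
Proof. apply Z.lt_le_incl, om_lo_pos. Qed.

Lemma encl_om_sq : encl (imul (om_ival (h1, h2)) (om_ival (h1, h2))) ((1 - h) ^ 2).
Proof.
  rewrite <- Rsqr_pow2. unfold Rsqr.
  apply encl_mul; [apply om_lo_nonneg|apply om_lo_nonneg|apply encl_om|apply encl_om].
Qed.

Lemma encl_h_sq : encl (imul (h1, h2) (h1, h2)) (h ^ 2).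
Proof.
  rewrite <- Rsqr_pow2. unfold Rsqr.
  apply encl_mul; [exact h1_ge0|exact h1_ge0|exact h_in|exact h_in].
Qed.

Lemma encl_A : encl (A_ival (h1, h2)) (2 - h + c_thr * h * (1 - h) ^ 2).
Proof.
  apply encl_add; [apply encl_sub; [apply encl_cst|exact h_in]|].
  apply encl_mul; [| |apply encl_mul| apply encl_om_sq].
  - apply imul_lo_nonneg; [apply c_lo_nonneg|exact h1_ge0].
  - apply imul_lo_nonneg; apply om_lo_nonneg.
  - apply c_lo_nonneg.
  - exact h1_ge0.
  - apply encl_c_thr.
  - exact h_in.
Qed.

Lemma encl_C : encl (C_ival (h1, h2)) (1 - c_thr * h ^ 2).
Proof.
  apply encl_sub; [apply encl_cst|].
  apply encl_mul; [apply c_lo_nonneg| |apply encl_c_thr|apply encl_h_sq].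
  apply imul_lo_nonneg; exact h1_ge0.
Qed.

Lemma encl_F : encl (F_ival (h1, h2)) (f_ratio h).
Proof.
  apply encl_sub; [apply encl_cst|].
  apply encl_mul; [apply c_lo_nonneg| |apply encl_c_thr|apply encl_om_sq].
  apply imul_lo_nonneg; apply om_lo_nonneg.
Qed.

Lemma encl_G :
  (0 <= fst (F_ival (h1, h2)))%Z -> encl (G_ival (h1, h2)) (1 - h ^ 2 * f_ratio h).
Proof.
  intros HF. apply encl_sub; [apply encl_cst|].
  apply encl_mul; [|exact HF|apply encl_h_sq|apply encl_F].
  apply imul_lo_nonneg; exact h1_ge0.
Qed.

Lemma encl_u :
  (0 <= fst (A_ival (h1, h2)))%Z -> (0 <= fst (C_ival (h1, h2)))%Z ->
  encl (u_ival (h1, h2)) (u_ratio h).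
Proof.
  intros HA HC. unfold u_ival, u_ratio.
  apply encl_mul; [|exact HC| |apply encl_C].
  - apply imul_lo_nonneg; [exact HA|apply om_lo_nonneg].
  - apply encl_mul; [exact HA|apply om_lo_nonneg|apply encl_A|apply encl_om].
Qed.

Lemma encl_v :
  (0 <= fst (F_ival (h1, h2)))%Z -> (0 <= fst (G_ival (h1, h2)))%Z ->
  encl (v_ival (h1, h2)) (v_ratio h).
Proof.
  intros HF HG. unfold v_ival, v_ratio, Rdiv.
  assert (HhF : (0 <= fst (imul (h1, h2) (F_ival (h1, h2))))%Z)
    by (apply imul_lo_nonneg; [exact h1_ge0|exact HF]).
  apply encl_mul; [apply imul_lo_nonneg; [exact HhF|exact HG]| | |].
  - apply iinv_lo_nonneg, om_hi_pos.
  - apply encl_mul; [exact HhF|exact HG| |apply (encl_G HF)].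
    apply encl_mul; [exact h1_ge0|exact HF|exact h_in|apply encl_F].
  - apply encl_inv; [apply om_lo_pos|apply encl_om].
Qed.

Lemma encl_y : encl (y_ival (h1, h2)) (h * (1 - h)).
Proof.
  destruct cell_h_range as [Hlo Hhi]. destruct h_in as [Hh1 Hh2]; cbn [fst snd] in *.
  unfold encl, y_ival; cbn [fst snd].
  assert (fx h1 * (1 - fx h1) <= h * (1 - h)) by nra.
  assert (h * (1 - h) <= fx h2 * (1 - fx h2)) by nra.
  pose proof (fx_mul_dn h1 (ONE - h1)). pose proof (fx_mul_up h2 (ONE - h2)).
  rewrite fx_sub, fx_ONE in *.
  lra.
Qed.

Lemma u_lo_nonneg :
  (0 <= fst (A_ival (h1, h2)))%Z -> (0 <= fst (C_ival (h1, h2)))%Z ->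
  (0 <= fst (u_ival (h1, h2)))%Z.
Proof.
  intros HA HC. unfold u_ival. apply imul_lo_nonneg; [|exact HC].
  apply imul_lo_nonneg; [exact HA|apply om_lo_nonneg].
Qed.

Lemma v_lo_nonneg :
  (0 <= fst (F_ival (h1, h2)))%Z -> (0 <= fst (G_ival (h1, h2)))%Z ->
  (0 <= fst (v_ival (h1, h2)))%Z.
Proof.
  intros HF HG. unfold v_ival. apply imul_lo_nonneg; [|apply iinv_lo_nonneg, om_hi_pos].
  apply imul_lo_nonneg; [|exact HG].
  apply imul_lo_nonneg; [exact h1_ge0|exact HF].
Qed.

End CellEnclosures.

(* Convexity of [exp]: weigh the tangent inequalities at [a ln z] taken at [ln z] and at [0]. *)
Lemma Rpower_le_tangent a z : 0 <= a <= 1 -> 0 < z -> Rpower z a <= 1 - a + a * z.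
Proof.
  intros Ha Hz. unfold Rpower.
  set (L := ln z). set (m := a * L).
  assert (Hz' : exp L = z) by (apply exp_ln; lra).
  assert (HL : exp L = exp m * exp (L - m)) by (rewrite <- exp_plus; f_equal; ring).
  assert (H0 : 1 = exp m * exp (- m)) by (rewrite <- exp_plus, <- exp_0; f_equal; ring).
  pose proof (exp_pos m).
  assert (exp m * (1 + (L - m)) <= exp L)
    by (rewrite HL; apply Rmult_le_compat_l, exp_ineq1_le; lra).
  assert (exp m * (1 + - m) <= 1)
    by (rewrite H0 at 2; apply Rmult_le_compat_l, exp_ineq1_le; lra).
  unfold m in *. nra.
Qed.

(* [z = (T, D)] carries a tangent point [c]: [T] bounds [c ^ alpha] and [D] bounds [1 / c]. *)
Definition tangent_ok (z : Z * Z) : Prop :=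
  exists c, 0 < c /\ Rpower c alpha <= fx (fst z) /\ / c <= fx (snd z).

(* [alpha * ONE] and [(1 - alpha) * ONE], rounded up *)
Definition alpha_up : Z := 766359604560.
Definition co_alpha_up : Z := 333152023217.

Definition pow_bound (z : Z * Z) (X : Z) : Z :=
  (mul_up (fst z) co_alpha_up + mul_up (mul_up (mul_up alpha_up (fst z)) (snd z)) X)%Z.

(* [x ^ alpha = c ^ alpha (x / c) ^ alpha <= c ^ alpha (1 - alpha + alpha x / c)]. *)
Lemma pow_bound_ge z x X :
  tangent_ok z -> 0 < x -> x <= fx X -> Rpower x alpha <= fx (pow_bound z X).
Proof.
  intros [c (Hc & HT & HD)] Hx HX.
  set (T := fx (fst z)) in *. set (D := fx (snd z)) in *.
  assert (Hxc : 0 < x / c) by (apply Rdiv_lt_0_compat; lra).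
  assert (Hpc := Rpower_pos c alpha).
  assert (Hxd : x / c <= x * D) by (unfold Rdiv; apply Rmult_le_compat_l; lra).
  assert (Htan : Rpower x alpha <= Rpower c alpha * (1 - alpha + alpha * (x / c))).
  { replace x with (c * (x / c)) at 1 by (field; lra).
    rewrite <- Rpower_mult_distr by lra.
    apply Rmult_le_compat_l; [lra|]. apply Rpower_le_tangent; [unfold alpha; lra|exact Hxc]. }
  assert (Hstep : Rpower x alpha <= T * (1 - alpha) + alpha * T * D * x).
  { apply (Rle_trans _ _ _ Htan). unfold alpha in *. nra. }
  apply (Rle_trans _ _ _ Hstep). unfold pow_bound. rewrite fx_add.
  assert (1 - alpha <= fx co_alpha_up) by (unfold fx, co_alpha_up, ONE, alpha; lra).
  assert (alpha <= fx alpha_up) by (unfold fx, alpha_up, ONE, alpha; lra).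
  assert (0 < alpha < 1) by (unfold alpha; lra).
  assert (0 <= alpha * T) by (apply Rmult_le_pos; lra).
  assert (0 <= alpha * T * D) by (apply Rmult_le_pos; [|pose proof (Rinv_0_lt_compat c Hc)]; lra).
  apply Rplus_le_compat; [apply mul_up_ge; unfold T in *; lra|].
  apply mul_up_ge; [lra|lra| |lra].
  apply mul_up_ge; [lra| pose proof (Rinv_0_lt_compat c Hc); lra| |unfold D; lra].
  apply mul_up_ge; unfold T in *; lra.
Qed.

Fixpoint pow_up (n : nat) (x : Z) : Z :=
  match n with O => ONE | S m => mul_up x (pow_up m x) end.

Lemma pow_up_ge r n x : 0 <= r -> r <= fx x -> r ^ n <= fx (pow_up n x).
Proof.
  intros Hr Hx. induction n as [|n IH]; cbn [pow pow_up].
  - rewrite fx_ONE. lra.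
  - apply mul_up_ge; auto using pow_le.
Qed.

Lemma Rpower_pow_alpha x : 0 < x -> Rpower (x ^ 1000) alpha = x ^ 697.
Proof.
  intros Hx. rewrite <- (Rpower_pow 1000 x Hx), Rpower_mult, <- (Rpower_pow 697 x Hx).
  f_equal. rewrite !INR_IZR_INZ. unfold alpha. cbn. field.
Qed.

(* Moving the tangent point from [c] to [c r ^ 1000] multiplies [c ^ alpha] by [r ^ 697]. *)
Lemma tangent_ok_rescale z r L M :
  tangent_ok z -> 0 < r -> r ^ 697 <= fx L -> / r ^ 1000 <= fx M ->
  tangent_ok (mul_up (fst z) L, mul_up (snd z) M).
Proof.
  intros [c (Hc & HT & HD)] Hr HL HM.
  assert (Hr1 : 0 < r ^ 1000) by (apply pow_lt; lra).
  exists (c * r ^ 1000). cbn [fst snd]. split; [nra|split].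
  - rewrite <- Rpower_mult_distr, Rpower_pow_alpha by lra.
    apply mul_up_ge; [left; apply Rpower_pos|left; apply pow_lt; lra|lra|lra].
  - rewrite Rinv_mult.
    apply mul_up_ge; [left; apply Rinv_0_lt_compat; lra..|lra|lra].
Qed.

Definition shrink : Z := Eval compute in (ONE - 2 ^ 22)%Z.
Definition shrink_pow_alpha : Z := Eval vm_compute in pow_up 697 shrink.
Definition grow_pow : Z := Eval vm_compute in pow_up 1000 (inv_up shrink).
Definition grow_pow_alpha : Z := Eval vm_compute in pow_up 697 (inv_up shrink).
Definition shrink_pow : Z := Eval vm_compute in pow_up 1000 shrink.

Definition tangent_down (z : Z * Z) : Z * Z :=
  (mul_up (fst z) shrink_pow_alpha, mul_up (snd z) grow_pow).
Definition tangent_up (z : Z * Z) : Z * Z :=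
  (mul_up (fst z) grow_pow_alpha, mul_up (snd z) shrink_pow).

Lemma shrink_pos : 0 < fx shrink.
Proof. unfold fx, shrink, ONE. lra. Qed.

Lemma tangent_ok_down z : tangent_ok z -> tangent_ok (tangent_down z).
Proof.
  intros Hz. pose proof shrink_pos. unfold tangent_down.
  apply (tangent_ok_rescale z (fx shrink) shrink_pow_alpha grow_pow Hz); [lra| |].
  - replace shrink_pow_alpha with (pow_up 697 shrink) by (vm_compute; reflexivity).
    apply pow_up_ge; lra.
  - replace grow_pow with (pow_up 1000 (inv_up shrink)) by (vm_compute; reflexivity).
    rewrite <- pow_inv. apply pow_up_ge; [left; now apply Rinv_0_lt_compat|].
    now apply fx_inv_up.
Qed.

Lemma tangent_ok_up z : tangent_ok z -> tangent_ok (tangent_up z).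
Proof.
  intros Hz. pose proof shrink_pos. unfold tangent_up.
  assert (Hr : 0 < / fx shrink) by now apply Rinv_0_lt_compat.
  apply (tangent_ok_rescale z (/ fx shrink) grow_pow_alpha shrink_pow Hz Hr).
  - replace grow_pow_alpha with (pow_up 697 (inv_up shrink)) by (vm_compute; reflexivity).
    apply pow_up_ge; [lra|]. now apply fx_inv_up.
  - replace shrink_pow with (pow_up 1000 shrink) by (vm_compute; reflexivity).
    rewrite <- pow_inv, Rinv_inv. apply pow_up_ge; lra.
Qed.

(* A heuristic: move the tangent point [c] to within a factor [fx shrink ^ 1000] of [x]. *)
Fixpoint retarget (fuel : nat) (x : Z) (z : Z * Z) : Z * Z :=
  match fuel with
  | O => z
  | S n =>
      if (ONE <? mul_up (snd z) x)%Z then retarget n x (tangent_up z)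
      else let zd := tangent_down z in
           if (mul_up (snd zd) x <=? ONE)%Z then retarget n x zd else z
  end.

Lemma tangent_ok_retarget fuel x z : tangent_ok z -> tangent_ok (retarget fuel x z).
Proof.
  revert z. induction fuel as [|n IH]; intros z Hz; cbn [retarget]; [exact Hz|].
  destruct (ONE <? mul_up (snd z) x)%Z; [now apply IH, tangent_ok_up|].
  destruct (mul_up (snd (tangent_down z)) x <=? ONE)%Z; [now apply IH, tangent_ok_down|exact Hz].
Qed.

Definition z_init : Z * Z := (ONE, ONE).

Lemma tangent_ok_init : tangent_ok z_init.
Proof.
  exists 1. unfold z_init; cbn [fst snd].
  unfold Rpower. rewrite ln_1, Rmult_0_r, exp_0, Rinv_1, fx_ONE. lra.
Qed.

(* [K * ONE], rounded down *)
Definition K_dn : Z := 1798801023041.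

Definition lo_nonneg (I : ival) : bool := (0 <=? fst I)%Z.

Definition cell_ok (h1 h2 : Z) (zu zv : Z * Z) : bool :=
  let hI := (h1, h2) in
  let u := u_ival hI in
  let v := v_ival hI in
  let y := y_ival hI in
  (0 <=? h1)%Z && (2 * h2 <=? ONE)%Z
  && lo_nonneg (A_ival hI) && lo_nonneg (C_ival hI)
  && lo_nonneg (F_ival hI) && lo_nonneg (G_ival hI)
  && (mul_up (pow_bound zu (snd u)) (5 * ONE - sqrt_dn (mul_dn (fst u) (fst y)))
      + mul_up (pow_bound zv (snd v)) (5 * ONE - sqrt_dn (mul_dn (fst v) (fst y)))
      <? mul_dn K_dn (5 * ONE - sqrt_up (snd y)))%Z.

Lemma pow_term_le_fx z X L x y :
  tangent_ok z -> 0 < x -> x <= fx X -> fx L <= x * y -> x * y <= / 4 ->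
  Rpower x alpha * (5 - sqrt (x * y)) <= fx (mul_up (pow_bound z X) (5 * ONE - sqrt_dn L)).
Proof.
  intros Hz Hx HX HL Hxy.
  assert (sqrt (x * y) <= / 2) by now apply sqrt_le_half.
  assert (fx (sqrt_dn L) <= sqrt (x * y))
    by (apply (Rle_trans _ _ _ (fx_sqrt_dn L)), sqrt_le_1_alt, HL).
  apply mul_up_ge; [left; apply Rpower_pos|lra|now apply pow_bound_ge|].
  rewrite fx_sub, fx_scale. lra.
Qed.

Lemma K_term_ge_fx Y y :
  y <= fx Y -> 0 <= y <= / 4 ->
  fx (mul_dn K_dn (5 * ONE - sqrt_up Y)) <= K * (5 - sqrt y).
Proof.
  intros HY Hy.
  assert (sqrt y <= fx (sqrt_up Y))
    by (apply (Rle_trans _ (sqrt (fx Y))); [apply sqrt_le_1_alt, HY|apply fx_sqrt_up]).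
  assert (sqrt y <= / 2) by (apply sqrt_le_half; lra).
  apply mul_dn_le; [unfold fx, K_dn, ONE; lra|unfold fx, K_dn, ONE, K; lra| |lra].
  rewrite fx_sub, fx_scale. lra.
Qed.

Lemma cell_ok_sound h1 h2 zu zv h :
  cell_ok h1 h2 zu zv = true -> tangent_ok zu -> tangent_ok zv ->
  fx h1 < h <= fx h2 -> reduced_ineq h.
Proof.
  unfold cell_ok, lo_nonneg. intros Hok Hu Hv Hh.
  repeat rewrite Bool.andb_true_iff in Hok.
  destruct Hok as ((((((H1 & H2) & HA) & HC) & HF) & HG) & Hfin).
  apply Z.leb_le in H1, H2, HA, HC, HF, HG. apply Z.ltb_lt, fx_lt in Hfin.
  rewrite fx_add in Hfin.
  assert (Hin : encl (h1, h2) h) by (unfold encl; cbn [fst snd]; lra).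
  destruct (cell_h_range h1 h2 H1 H2) as [Hlo Hhalf].
  assert (Hh' : 0 < h <= 1 / 2) by lra.
  pose proof (encl_u h1 h2 h H1 H2 Hin HA HC) as [Hul Huh].
  pose proof (encl_v h1 h2 h H1 H2 Hin HF HG) as [Hvl Hvh].
  pose proof (encl_y h1 h2 h H1 H2 Hin) as [Hyl Hyh].
  pose proof (u_ratio_pos h Hh'). pose proof (v_ratio_pos h Hh').
  assert (Hy : 0 <= h * (1 - h) <= / 4) by (split; [nra|apply var_le_quarter]).
  assert (Huy : u_ratio h * (h * (1 - h)) <= / 4)
    by (rewrite <- serial_threshold_var; apply var_le_quarter).
  assert (Hvy : v_ratio h * (h * (1 - h)) <= / 4)
    by (rewrite <- parallel_threshold_var by lra; apply var_le_quarter).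
  set (u := u_ival (h1, h2)) in *. set (v := v_ival (h1, h2)) in *.
  set (y := y_ival (h1, h2)) in *.
  assert (Hu0 : 0 <= fx (fst u)) by (apply fx_nonneg, (u_lo_nonneg h1 h2); assumption).
  assert (Hv0 : 0 <= fx (fst v)) by (apply fx_nonneg, (v_lo_nonneg h1 h2 h); assumption).
  assert (Tu := pow_term_le_fx zu (snd u) (mul_dn (fst u) (fst y)) (u_ratio h) (h * (1 - h))
                  Hu ltac:(assumption) Huh ltac:(apply mul_dn_le; lra) Huy).
  assert (Tv := pow_term_le_fx zv (snd v) (mul_dn (fst v) (fst y)) (v_ratio h) (h * (1 - h))
                  Hv ltac:(assumption) Hvh ltac:(apply mul_dn_le; lra) Hvy).
  pose proof (K_term_ge_fx (snd y) (h * (1 - h)) Hyh Hy).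
  unfold reduced_ineq. lra.
Qed.

Fixpoint partition_ok (fuel : nat) (hs : list Z) (h1 : Z) (zu zv : Z * Z) : bool :=
  match hs with
  | [] => (2 * h1 =? ONE)%Z
  | h2 :: rest =>
      let zu' := retarget fuel (snd (u_ival (h1, h2))) zu in
      let zv' := retarget fuel (snd (v_ival (h1, h2))) zv in
      cell_ok h1 h2 zu' zv' && partition_ok fuel rest h2 zu' zv'
  end.

Lemma partition_ok_sound fuel hs :
  forall h1 zu zv, partition_ok fuel hs h1 zu zv = true -> tangent_ok zu -> tangent_ok zv ->
  forall h, fx h1 < h <= 1 / 2 -> reduced_ineq h.
Proof.
  induction hs as [|h2 rest IH]; intros h1 zu zv Hok Hu Hv h Hh; cbn [partition_ok] in Hok.
  - apply Z.eqb_eq in Hok.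
    assert (Hfx := fx_mulZ 2 h1). rewrite Hok, fx_ONE in Hfx. lra.
  - apply Bool.andb_true_iff in Hok as [Hcell Hrest].
    pose proof (tangent_ok_retarget fuel (snd (u_ival (h1, h2))) zu Hu) as Hu'.
    pose proof (tangent_ok_retarget fuel (snd (v_ival (h1, h2))) zv Hv) as Hv'.
    destruct (Rle_lt_dec h (fx h2)) as [Hle|Hlt].
    + exact (cell_ok_sound h1 h2 _ _ h Hcell Hu' Hv' ltac:(lra)).
    + exact (IH h2 _ _ Hrest Hu' Hv' h ltac:(lra)).
Qed.

(* Right endpoints of the cells of a partition of [(0, 1/2]], in units of [1 / ONE]. *)
Definition partition : list Z := ([
  811842560; 2469879808; 4403205120; 6391463936; 8343806976; 10221929472; 12010897408;
  13707990016; 15314294784; 16835171328; 18275655680; 19640856576; 20936760320; 22168112128;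
  23339437056; 24456251392; 25521699840; 26540220416; 27514610688; 28447725568; 29343245312;
  30203009024; 31029214208; 31824768000; 32591029248; 33329592320; 34042070016; 34730875904;
  35396665344; 36040601600; 36663758848; 37268194304; 37854205952; 38422648832; 38974324736;
  39509978112; 40031310848; 40538342400; 41031652352; 41511746560; 41979218944; 42434560000;
  42879416320; 43313328128; 43736693760; 44149878784; 44553337856; 44947388416; 45333264384;
  45710618624; 46079728640; 46440861696; 46794218496; 47140111360; 47478771712; 47810485248;
  48136426496; 48455982080; 48769335296; 49076656128; 49378184192; 49674032128; 49964338176;
  50249331712; 50529087488; 50804800512; 51075721216; 51342040064; 51603798016; 51861194752;
  52114319360; 52363218944; 52608070656; 52848959488; 53085899776; 53319079936; 53549600768;
  53776666624; 54000351232; 54220726272; 54437791744; 54651704320; 54862529536; 55070331904;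
  55275173888; 55477114880; 55676215296; 55872531456; 56066118656; 56258055168; 56447490048;
  56634470400; 56819126272; 57001431040; 57181426688; 57359155200; 57534654464; 57707961344;
  57879109632; 58048223232; 58215272448; 58380288000; 58543297536; 58704325632; 58863505408;
  59021858816; 59178439680; 59333266432; 59486471168; 59637996544; 59787854848; 59936157696;
  60082864128; 60227982336; 60371614720; 60513725440; 60654317568; 60793497600; 60931220480;
  61067485184; 61202414592; 61335941120; 61468149760; 61599009792; 61729585152; 61859007488;
  61987205120; 62114266112; 62240145408; 62364825600; 62488446976; 62610908160; 62732331008;
  62852629504; 62971910144; 63090100224; 63207296000; 63323430912; 63438595072; 63552726016;
  63665910784; 63778086912; 63889342464; 63999611904; 64108986368; 64217394176; 64325932032;
  64433592320; 64540481536; 64646505472; 64751783936; 64856206336; 64959909888; 65062865920;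
  65165026304; 65266466816; 65367115776; 65467071488; 65566238720; 65664740352; 65762550784;
  65859622912; 65956033536; 66051701760; 66146736128; 66241021952; 66334702592; 66427756544;
  66520102912; 66611851264; 66702980096; 66793440256; 66883310592; 66972495872; 67062149120;
  67151282176; 67239822336; 67327870976; 67415407616; 67502379008; 67588867072; 67674765312;
  67760209920; 67845181440; 67929584640; 68013544448; 68097041408; 68179988480; 68262502400;
  68344564736; 68426093568; 68507200512; 68587868160; 68668014592; 68747751424; 68827062272;
  68905861120; 68984263680; 69062253568; 69139736576; 69216837632; 69293541376; 69369740288;
  69445571584; 69521020928; 69596071936; 69670663168; 69745906688; 69820819456; 69895320576;
  69969519616; 70043401216; 70116865024; 70190041088; 70262915072; 70335471616; 70407645184;
  70479531008; 70551114752; 70622303232; 70693219328; 70763849728; 70834180096; 70904142848;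
  70973836288; 71043246080; 71112270848; 71181041664; 71249545216; 71317769216; 71385629696;
  71453239296; 71520586752; 71587658752; 71654384640; 71720865792; 71787088896; 71853042688;
  71918664704; 71984047104; 72049177600; 72113947648; 72178495488; 72242808832; 72306877440;
  72370593792; 72435113984; 72499451904; 72563596288; 72627440640; 72691120128; 72754622464;
  72817937408; 72880955392; 72943813632; 73006501888; 73069008896; 73131323392; 73193380864;
  73255275520; 73316995072; 73378530304; 73439806464; 73500925952; 73561878528; 73622653952;
  73683165184; 73743527936; 73803731968; 73863767040; 73923529728; 73983152128; 74042624000;
  74101935104; 74161076224; 74219972608; 74278727680; 74337330176; 74395771904; 74453956608;
  74512008192; 74569917440; 74627675136; 74685272064; 74742632448; 74799859712; 74856945664;
  74913880064; 74970560512; 75027118080; 75083543552; 75140861952; 75198071808; 75255085056;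
  75312016384; 75368857600; 75425599488; 75482231808; 75538682880; 75595053056; 75651333120;
  75707513856; 75763489792; 75819394048; 75875217408; 75930951680; 75986587648; 76042030080;
  76097401856; 76152693760; 76207898624; 76263006208; 76317928448; 76372781056; 76427555840;
  76482245632; 76536841216; 76591255552; 76645603328; 76699875328; 76754064384; 76808161280;
  76862081024; 76915936256; 76969718784; 77023420416; 77077033984; 77130471424; 77183847424;
  77237153792; 77290382336; 77343524864; 77396491264; 77449399296; 77502240768; 77555007488;
  77607692288; 77660197888; 77712648192; 77765036032; 77818384384; 77871693824; 77924859904;
  77978013696; 78031148032; 78084254720; 78137325568; 78190248960; 78243163136; 78296060928;
  78348934144; 78401774592; 78454575104; 78507256832; 78559925248; 78612572160; 78665190400;
  78717771776; 78770228224; 78822675456; 78875105280; 78927509504; 78979880960; 79032119296;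
  79084351488; 79136570368; 79188767744; 79240936448; 79292962816; 79344987136; 79397001216;
  79448998912; 79500972032; 79552912384; 79604733952; 79656549376; 79708352512; 79760135168;
  79811890176; 79863514112; 79915137024; 79966750720; 80018349056; 80069923840; 80121467904;
  80172901376; 80224330752; 80275748864; 80327148544; 80378522624; 80429770752; 80481019904;
  80533322752; 80585652224; 80638000128; 80690249728; 80742544384; 80794876928; 80847240192;
  80899625984; 80952028160; 81004352512; 81056719872; 81109122048; 81161550848; 81214000128;
  81266358272; 81318763520; 81371207680; 81423683584; 81476184064; 81528700928; 81581148160;
  81633638400; 81686165504; 81738721280; 81791297536; 81843789824; 81896330240; 81948911616;
  82001525760; 82054165504; 82106822656; 82159416320; 82212055040; 82264731648; 82317437952;
  82370166784; 82422815744; 82475514880; 82528256000; 82581030912; 82633833472; 82686540800;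
  82739302400; 82792111104; 82844958720; 82897837056; 82950739968; 83003567104; 83056445440;
  83109366784; 83162323968; 83216377856; 83270383616; 83324487680; 83378682880; 83432961024;
  83487313920; 83541733376; 83596129280; 83650620416; 83705198592; 83759855616; 83814583296;
  83869276160; 83924068352; 83978951680; 84033917952; 84088958976; 84143952896; 84199050240;
  84254242816; 84309522432; 84364880896; 84420310016; 84475717632; 84531224576; 84586821632;
  84642501632; 84698255360; 84753978368; 84809803776; 84865724416; 84921731072; 84977814528;
  85033858048; 85090007040; 85146254336; 85202590720; 85259008000; 85315497984; 85371975680;
  85428554752; 85485225984; 85541981184; 85598812160; 85655622656; 85712536576; 85769546752;
  85826643968; 85884888064; 85943151616; 86001569792; 86060133376; 86118834176; 86177664000;
  86236510208; 86295514112; 86354666496; 86413958144; 86473380864; 86532818944; 86592416768;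
  86652166144; 86712057856; 86772081664; 86832120832; 86892321792; 86952676352; 87013175296;
  87073808384; 87134457856; 87195271168; 87256240128; 87317354496; 87378604032; 87439872000;
  87501305856; 87562896384; 87624633344; 87686507520; 87748403200; 87810466816; 87872687104;
  87935054848; 87997559808; 88060092416; 88122792960; 88185651200; 88248656896; 88311799808;
  88374976512; 88438321152; 88501823488; 88566556672; 88631479296; 88696499200; 88761741312;
  88827194368; 88892847104; 88958569472; 89024524288; 89090700288; 89157086208; 89223671808;
  89290343424; 89357245440; 89424367616; 89491698688; 89559227392; 89626860544; 89694723072;
  89762803712; 89831090176; 89899459584; 89968066560; 90036900864; 90105950208; 90175202304;
  90244559872; 90314151936; 90383968256; 90453995520; 90524107776; 90594463744; 90665051136;
  90735857664; 90806870016; 90877995008; 90949358592; 91020948480; 91092752384; 91164651520;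
  91237891072; 91311425536; 91385241600; 91459203072; 91533479936; 91608058880; 91682926592;
  91758069760; 91833397248; 91909033984; 91984965632; 92061178880; 92137570304; 92214277120;
  92291284992; 92368579584; 92446048256; 92523837440; 92601932800; 92680320000; 92758879232;
  92837764096; 92916960256; 92996451328; 93076115456; 93156108288; 93236415488; 93317021696;
  93397803008; 93478917120; 93560347648; 93642080256; 93723991040; 93806236672; 93889895424;
  93973927936; 94058218496; 94142917632; 94228008960; 94313475072; 94399212544; 94485360640;
  94571901952; 94658818048; 94746021888; 94833637376; 94921645056; 95009905664; 95098594304;
  95187693568; 95277184000; 95366948864; 95457139712; 95547739136; 95638726656; 95730012160;
  95821721600; 95913834496; 96006215680; 96099036160; 96192275456; 96285914112; 96379848704;
  96474217472; 96570120192; 96666376192; 96763162624; 96860459008; 96958242816; 97056418816;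
  97155118080; 97254320128; 97353895936; 97454010368; 97554639872; 97655628800; 97757168640;
  97859236864; 97961808896; 98064786432; 98168303616; 98272335872; 98376763392; 98481740800;
  98587244544; 98693133312; 98799583232; 98906567680; 99013929984; 99121862656; 99231475712;
  99341699072; 99452453888; 99563853824; 99675872256; 99788424192; 99901629440; 100015460352;
  100129828864; 100244857856; 100360517632; 100476721152; 100593590272; 100711094272;
  100829151232; 100947876864; 101067100160; 101187025920; 101307622400; 101428728832;
  101550539776; 101673021440; 101797109760; 101922008064; 102047683584; 102174010368;
  102301147136; 102429060096; 102557647872; 102687044608; 102817073152; 102947942400;
  103079615488; 103211949056; 103345118208; 103479084032; 103613740032; 103749223424;
  103885358080; 104022349824; 104160157696; 104298651648; 104439083008; 104580438016;
  104722637824; 104865789952; 105009757184; 105154706432; 105300592640; 105447340032;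
  105595051008; 105743596544; 105893133312; 106043479040; 106194841600; 106347171840;
  106500362240; 106654543872; 106809564160; 106965599232; 107123594240; 107282762752;
  107443051520; 107604355072; 107766801408; 107930249216; 108094860288; 108260461568;
  108427245568; 108595008512; 108763973632; 108934079488; 109105232896; 109277543424;
  109450893312; 109625413632; 109802161152; 109980243968; 110159509504; 110340124672;
  110521923584; 110705082368; 110889426944; 111075140608; 111262043136; 111450321920;
  111639792640; 111830644736; 112022693888; 112216126464; 112411957248; 112609341440;
  112808108032; 113008429056; 113210145792; 113413414912; 113618093056; 113824318464;
  114031967232; 114241154048; 114451779584; 114663778304; 114878465024; 115094727680;
  115312768000; 115532407808; 115753807872; 115976830976; 116201594880; 116428004352;
  116656002048; 116885794816; 117117201408; 117350372352; 117586354176; 117824123904;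
  118063907840; 118305511424; 118549091328; 118794521600; 119041752064; 119290993664;
  119542067200; 119795100672; 120049994752; 120307986432; 120568180736; 120830446592;
  121094743040; 121361256448; 121629834240; 121900435456; 122173256704; 122448134144;
  122726175744; 123006667776; 123289454592; 123574499328; 123861979136; 124151754752;
  124443789312; 124738227200; 125034957824; 125335119872; 125637767168; 125943097344;
  126250949632; 126561293312; 126874096640; 127189583872; 127507562496; 127829112832;
  128153372672; 128480567296; 128810506240; 129143161856; 129478505472; 129816730624;
  130157668352; 130502494208; 130850277376; 131200993280; 131554846720; 131911655424;
  132271390720; 132634027008; 133000690688; 133370713088; 133743940608; 134120347648;
  134499908608; 134882595840; 135268381696; 135658484736; 136052177920; 136449278976;
  136849761280; 137253596160; 137660753920; 138072342528; 138487553024; 138906357760;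
  139328727040; 139754629120; 140184240128; 140618496000; 141056592896; 141498497024;
  141944173568; 142393584640; 142846691328; 143304734720; 143766792192; 144232824832;
  144702788608; 145176639488; 145655468032; 146138508288; 146625713152; 147117032448;
  147612413952; 148112890880; 148617755648; 149126952960; 149640423424; 150158103552;
  150681068544; 151208567808; 151740532736; 152276701184; 152817219584; 153363308544;
  153914072064; 154469429248; 155029296128; 155594657792; 156164845568; 156739766272;
  157319322624; 157903249408; 158493089792; 159087827968; 159687353344; 160291549184;
  160901665792; 161516551168; 162136349696; 162760931328; 163391546368; 164027226112;
  164667827200; 165313062912; 165964488704; 166621041664; 167282561024; 167949753344;
  168622265344; 169299922944; 169982544896; 170671034368; 171364832256; 172063742976;
  172767563776; 173477511168; 174192699392; 174912909312; 175639300096; 176370759680;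
  177107329024; 177849958400; 178597672960; 179350555648; 180108345344; 180872271872;
  181641396224; 182415437824; 183195515904; 183980787712; 184770954240; 185567089664;
  186368380928; 187174508544; 187986568192; 188803707904; 189625588736; 190453391360;
  191286160384; 192124596224; 192967916544; 193816047616; 194669585408; 195528129536;
  196391288832; 197259914240; 198133329920; 199010861056; 199894196224; 200782062592;
  201674993664; 202572599296; 203474172928; 204381180928; 205292539904; 206207647744;
  207128188928; 208052482048; 208981868544; 209915331584; 210852278272; 211794325504;
  212739832832; 213690119168; 214643830784; 215602009088; 216563942400; 217528965120;
  218498477056; 219471014912; 220447744000; 221427743744; 222410384384; 223397246976;
  224386657280; 225380008960; 226375801856; 227375263744; 228377421824; 229382612992;
  230390479872; 231400200192; 232413380608; 233428610048; 234446708736; 235466817536;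
  236489433088; 237514014720; 238541085696; 239569729536; 240599673856; 241631962112;
  242665494528; 243701390336; 244738086912; 245776942080; 246816374784; 247857766400;
  248899972096; 249943474176; 250987724800; 252033324032; 253079184384; 254126220288;
  255173639168; 256221676544; 257270031360; 258318085120; 259366931456; 260415414272;
  261464705024; 262513163264; 263562289152; 264610714624; 265659219968; 266706966528;
  267754912768; 268801513472; 269848193024; 270893808640; 271939195904; 272983018496;
  274026505216; 275068649472; 276110173184; 277149885440; 278188882944; 279226287104;
  280262715392; 281297051648; 282330324992; 283361785856; 284391944192; 285420114944;
  286446481408; 287470842880; 288492661760; 289513265152; 290531183616; 291547324416;
  292560773120; 293572730880; 294581875712; 295589341184; 296593886208; 297596574720;
  298595887104; 299593267200; 300587639808; 301579913216; 302569103360; 303556034560;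
  304539819008; 305521192960; 306499368960; 307474989056; 308447370240; 309416672256;
  310382747648; 311345149952; 312305179648; 313261515776; 314215340032; 315165458432;
  316112927744; 317056689152; 317997664256; 318934935552; 319869285376; 320799942656;
  321727542272; 322651466752; 323571316736; 324488396800; 325401431040; 326311553024;
  327218081792; 328121602048; 329021198336; 329917644800; 330810214400; 331699487744;
  332584934400; 333466187776; 334344411136; 335218494464; 336089383936; 336956186624;
  337820140544; 338680168448; 339535920128; 340388644864; 341237154816; 342082447360;
  342923584512; 343761845248; 344596146176; 345426151424; 346253068288; 347075748864;
  347895569408; 348711372800; 349523793920; 350332255232; 351136427008; 351937826816;
  352735176704; 353529204736; 354319232000; 355104933888; 355888013312; 356667019264;
  357442709504; 358214364160; 358982279168; 359747150848; 360507926528; 361265775616;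
  362019795968; 362769670144; 363516408832; 364259593216; 364999532544; 365735613440;
  366468007936; 367197370368; 367922830336; 368644070400; 369362916352; 370077820928;
  370789455872; 371497862144; 372202289152; 372903593984; 373601653760; 374295697408;
  374987247616; 375675063296; 376359705600; 377041156096; 377718832128; 378393418752;
  379064881152; 379732523008; 380397644800; 381059222528; 381716928512; 382372320256;
  383024111616; 383672491008; 384318241792; 384960328704; 385599165440; 386235352064;
  386868412416; 387497790464; 388124954624; 388748698624; 389368680448; 389986666496;
  390601144320; 391212465152; 391821304832; 392427152384; 393029469184; 393629713408;
  394226670592; 394820477952; 395411934208; 395999983616; 396585164800; 397167797248;
  397747760128; 398324272128; 398898862080; 399470222336; 400038838272; 400604877824;
  401168391168; 401728615424; 402286855168; 402842009600; 403394612224; 403943857152;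
  404491440128; 405036363776; 405578236928; 406118189056; 406655278080; 407189740544;
  407721066496; 408250792960; 408777556992; 409301755904; 409823735808; 410343410688;
  410860009472; 411374928896; 411887507456; 412397291520; 412904572928; 413409773568;
  413912744960; 414412780544; 414910441472; 415406614528; 415900118016; 416391254016;
  416880318464; 417367300096; 417851935744; 418333867008; 418814345216; 419292227584;
  419767939072; 420240755712; 420712399872; 421181919232; 421648779264; 422114197504;
  422577547264; 423038464000; 423497224192; 423954073600; 424409066496; 424861976576;
  425312358400; 425761441792; 426208054272; 426652815360; 427095507968; 427536417792;
  427975566336; 428412742656; 428847464448; 429281003520; 429712673792; 430142069760;
  430569548800; 430995716096; 431419780096; 431842041856; 432261859328; 432680578048;
  433097614336; 433512360960; 433925392384; 434336525312; 434746174464; 435154238464;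
  435560538112; 435964488704; 436367549440; 436768985088; 437168198656; 437565770752;
  437962298368; 438356720640; 438749646848; 439140912128; 439530354688; 439918574592;
  440305287168; 440690332672; 441073306624; 441455391744; 441835969536; 442214563840;
  442591652864; 442967087104; 443341207552; 443713988608; 444085281792; 444454941696;
  444822606848; 445189654528; 445555240960; 445918887936; 446281090048; 446642483200;
  447001982976; 447360212992; 447717038080; 448072324096; 448426438656; 448779327488;
  449130859520; 449480417280; 449828644864; 450176267264; 450522589184; 450867102720;
  451210344448; 451552191488; 451893377024; 452232907776; 452571232256; 452908231680;
  453243290624; 453577894912; 453911365632; 454243586048; 454573998080; 454903198720;
  455231865856; 455559363584; 455885172736; 456209853440; 456533296128; 456856118272;
  457177359360; 457497559040; 457816610816; 458134409216; 458450461696; 458766209024;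
  459080902656; 459394440192; 459706315776; 460017085440; 460327439360; 460636738560;
  460944446464; 461251150848; 461556753408; 461861158912; 462164696064; 462467335168;
  462768980992; 463069539328; 463368918016; 463667473408; 463965146112; 464261844992;
  464557478912; 464851563520; 465144641536; 465437455360; 465729321984; 466019660800;
  466309110784; 466597585920; 466885001216; 467172147200; 467457917952; 467742835712;
  468026816512; 468309778432; 468591132672; 468872428544; 469152913408; 469432506368;
  469711127552; 469988268032; 470264501248; 470540643328; 470815943680; 471090324480;
  471363337216; 471635496960; 471906727936; 472177823744; 472448057344; 472717020160;
  472985188352; 473252487168; 473518845952; 473785014272; 474049995776; 474314244096;
  474577688576; 474840258560; 475101885440; 475362940928; 475623330816; 475882984448;
  476141834240; 476399812608; 476656520192; 476913098752; 477169013760; 477424198656;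
  477678586880; 477931748352; 478184184832; 478435831808; 478687394816; 478938240000;
  479187887104; 479436887040; 479685178368; 479932697600; 480179384320; 480425533440;
  480671117312; 480916075520; 481160346624; 481403870208; 481646586880; 481888756736;
  482130384896; 482371412992; 482611781632; 482851432448; 483089828864; 483327582208;
  483565360128; 483802568704; 484039150592; 484275049472; 484509799424; 484743941120;
  484977419264; 485210910720; 485443813376; 485676072960; 485907271680; 486137902080;
  486367909888; 486597242880; 486826564608; 487054773248; 487282509824; 487509721088;
  487736355840; 487962362880; 488187691008; 488412469248; 488636821504; 488860696576;
  489084043264; 489306812416; 489528953856; 489749911552; 489970318336; 490190927872;
  490411062272; 490630672384; 490849710080; 491068128256; 491285516288; 491502360576;
  491719343104; 491935857664; 492151857152; 492367295488; 492581720064; 492795660288;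
  493009070080; 493221903360; 493434919936; 493647436800; 493858941952; 494070024192;
  494280637440; 494490738688; 494700282880; 494909921280; 495119079424; 495327332352;
  495535181824; 495742583808; 495949495296; 496155874304; 496361678848; 496567120896;
  496772226048; 496976951296; 497181253632; 497385093120; 497588427776; 497791216640;
  497992992768; 498195045376; 498396746752; 498598054912; 498798929920; 498999331840;
  499199221760; 499398160384; 499596663808; 499795434496; 499993844736; 500191856640;
  500389430272; 500586526720; 500782720000; 500978513920; 501173869568; 501369470976;
  501564709888; 501759548416; 501953949696; 502147480576; 502340649984; 502533421056;
  502725756928; 502918304768; 503110493184; 503302285312; 503493225472; 503683845120;
  503874108416; 504063979520; 504253422592; 504443033600; 504632292352; 504820703232;
  505008837632; 505196659712; 505384135680; 505571229696; 505757907968; 505944135680;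
  506130068480; 506315770880; 506501208064; 506686346240; 506871150592; 507055588352;
  507239625728; 507423229952; 507606540288; 507789634560; 507972478976; 508155039744;
  508337284096; 508519180288; 508700694528; 508881795072; 509062052864; 509242636288;
  509422987264; 509603075072; 509782866944; 509962331136; 510141435904; 510319648768;
  510497576960; 510675189760; 510853144576; 511030857728; 511208298496; 511385436160;
  511562238976; 511738192896; 511913887744; 512089292800; 512264377344; 512439808000;
  512614991872; 512789899264; 512964500480; 513138280448; 513311828992; 513485115392;
  513658109952; 513830784000; 514003798016; 514176565248; 514349054976; 514520739840;
  514692221952; 514863471616; 515034461184; 515205160960; 515375543296; 515546250240;
  515716712448; 515886370816; 516055858176; 516225145856; 516394206208; 516563010560;
  516731531264; 516899740672; 517068249088; 517236518912; 517404073984; 517571464192;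
  517738660864; 517905637376; 518072366080; 518238819328; 518404970496; 518570792960;
  518736472064; 518902021120; 519067413504; 519232621568; 519397619712; 519562380288;
  519726877696; 519891085312; 520054977536; 520218731520; 520382366720; 520545856512;
  520709175296; 520872296448; 521035193344; 521197840384; 521360212992; 521522284544;
  521684202496; 521846013952; 522007694336; 522169218048; 522330558464; 522491691008;
  522652590080; 522813231104; 522973064192; 523132710912; 523292786688; 523452746752;
  523612566528; 523772220416; 523931684864; 524090934272; 524249944064; 524408172544;
  524566234112; 524724103168; 524882426880; 525040629760; 525198686208; 525356571648;
  525514262528; 525671734272; 525828441088; 525985000448; 526141387776; 526297579520;
  526454246400; 526610787328; 526767179776; 526923399168; 527079421952; 527235224576;
  527390359552; 527545345024; 527700157440; 527855363072; 528010465280; 528165441536;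
  528320268288; 528474923008; 528629381120; 528783163392; 528936820736; 529090329600;
  529243667456; 529397403648; 529551037440; 529704546304; 529857907712; 530011099136;
  530163596288; 530315993088; 530468267008; 530620395520; 530772356096; 530924715008;
  531076975616; 531229114368; 531381109760; 531532939264; 531684139008; 531835242496;
  531986227200; 532137071616; 532287753216; 532438827008; 532589806592; 532740670464;
  532891396096; 533041455104; 533191445504; 533341344768; 533491131392; 533640784896;
  533790282752; 533939603456; 534089395200; 534239078400; 534388631552; 534537560064;
  534686427136; 534835211264; 534983890944; 535132444672; 535280851968; 535429091328;
  535577785344; 535726379008; 535874851840; 536022733824; 536170563584; 536318318592;
  536465978368; 536613522432; 536760929280; 536908178432; 537055861760; 537203454976;
  537350394880; 537497312256; 537644186624; 537790997504; 537937723392; 538084343808;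
  538230838272; 538377186304; 538523944960; 538670624768; 538816667648; 538962699264;
  539108699136; 539254646784; 539400521728; 539546302464; 539691969536; 539837502464;
  539982880768; 540128731136; 540273954816; 540419178496; 540564382720; 540709547008;
  540854650880; 540999673856; 541144596480; 541289398272; 541434058752; 541579161600;
  541724190720; 541868681216; 542013164544; 542157621248; 542302030848; 542446373888;
  542590629888; 542734779392; 542878801920; 543023236096; 543167609856; 543311439872;
  543455277056; 543599101952; 543742893056; 543886631936; 544030298112; 544173872128;
  544317334528; 544460664832; 544604461056; 544747702272; 544890964992; 545034229760;
  545177476096; 545320684544; 545463835648; 545606909952; 545749888000; 545892750336;
  546036043776; 546178765824; 546321523712; 546464299008; 546607071232; 546749820928;
  546892528640; 547035175936; 547177742336; 547320209408; 547462556672; 547605387264;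
  547747708928; 547890062336; 548032429056; 548174789632; 548317124608; 548459414528;
  548601639936; 548743782400; 548885821440; 549028310016; 549170262016; 549312262144;
  549454290944; 549596329984; 549738359808; 549755813888])%Z.

Lemma partition_certified : partition_ok 5000 partition 0 z_init z_init = true.
Proof. vm_cast_no_check (eq_refl true). Qed.

Lemma reduced_ineq_holds h : 0 < h <= 1 / 2 -> reduced_ineq h.
Proof.
  intros Hh.
  apply (partition_ok_sound 5000 partition 0 z_init z_init partition_certified
           tangent_ok_init tangent_ok_init).
  rewrite fx0. lra.
Qed.

(* The factor [(h (1 - h)) ^ alpha] is common to all three values of [psi]; cancelling it
   leaves [reduced_ineq h]. *)
Lemma psi_children_threshold h :
  0 < h <= 1 / 2 ->
  psi (serial_entropy h (9 / 7 * (h * (1 - h))))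
  + psi (parallel_entropy h (9 / 7 * (h * (1 - h)))) < K * psi h.
Proof.
  intros Hh.
  assert (Hy : 0 < h * (1 - h)) by nra.
  pose proof (u_ratio_pos h Hh). pose proof (v_ratio_pos h Hh).
  pose proof (reduced_ineq_holds h Hh) as Hred. unfold reduced_ineq in Hred.
  assert (Hs : 0 < serial_entropy h (9 / 7 * (h * (1 - h))) < 1)
    by (unfold serial_entropy; nra).
  assert (Hp : 0 < parallel_entropy h (9 / 7 * (h * (1 - h))) < 1)
    by (unfold parallel_entropy; nra).
  rewrite !psi_phi, serial_threshold_var, parallel_threshold_var, !phi_eq by nra.
  rewrite <- (Rpower_mult_distr (u_ratio h)), <- (Rpower_mult_distr (v_ratio h)) by lra.
  apply (Rmult_lt_compat_l (Rpower (h * (1 - h)) alpha)) in Hred; [|apply Rpower_pos].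
  lra.
Qed.

Lemma psi_children_lt h E :
  0 < h <= 1 / 2 -> 9 / 7 * (h * (1 - h)) <= E <= 2 * h ->
  psi (serial_entropy h E) + psi (parallel_entropy h E) < K * psi h.
Proof.
  intros Hh HE.
  assert (HE0 : 0 <= 9 / 7 * (h * (1 - h))) by nra.
  assert (E * E <= 2 * h * (2 * h)) by (apply Rmult_le_compat; lra).
  assert (Hp : 0 < parallel_entropy h E) by (unfold parallel_entropy; nra).
  apply (Rle_lt_trans _ _ _ (psi_children_antitone h (9 / 7 * (h * (1 - h))) E Hh ltac:(lra) Hp)).
  now apply psi_children_threshold.
Qed.

Lemma psi_children_lt_sym h E :
  0 < h < 1 -> 9 / 7 * (h * (1 - h)) <= E -> E <= 2 * h -> E <= 2 * (1 - h) ->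
  psi (serial_entropy h E) + psi (parallel_entropy h E) < K * psi h.
Proof.
  intros Hh HE HE1 HE2.
  destruct (Rle_lt_dec h (1 / 2)); [apply psi_children_lt; lra|].
  rewrite <- (psi_reflect h), <- (psi_reflect (serial_entropy h E)),
    <- (psi_reflect (parallel_entropy h E)), <- parallel_entropy_reflect,
    <- serial_entropy_reflect, Rplus_comm.
  apply psi_children_lt; nra.
Qed.

Theorem mainTheorem10 (W : TEC) :
  valid W -> balanced W ->
  0 < entropy W < 1 ->
  quetelet W >= 9 / 7 ->
  (psi (entropy (serial_child W)) + psi (entropy (parallel_child W)))
    / (2 * psi (entropy W)) < 818 / 1000.
Proof.
  intros Hvalid Hbal Hh HQ.
  pose proof (edge_mass_ge_of_quetelet W Hh HQ) as HE.
  pose proof (edge_mass_le_entropy W Hvalid) as [HE1 HE2].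
  pose proof (psi_children_lt_sym _ _ Hh HE HE1 HE2) as Hsum.
  rewrite (entropy_serial_child W Hvalid Hbal), (entropy_parallel_child W Hbal).
  pose proof (psi_pos _ Hh).
  apply (Rmult_lt_reg_r (2 * psi (entropy W))); [lra|].
  unfold Rdiv. rewrite Rmult_assoc, Rinv_l by lra. unfold K in Hsum. lra.
Qed.
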